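(* Let $D$ be a checkerboard colorable virtual link diagram, and let $\mathbf{G}_D$ and $\mathbf{G}^*_D$ be the two signed ribbon graphs (signed Tait graphs) associated with the two checkerboard colorings of $D$. Then $\mathbf{G}_D$ and $\mathbf{G}^*_D$ are orientable.
   Context: A virtual link diagram is a generic immersion of a closed 1-manifold in the plane whose double points are real crossings (with over/under information) or virtual crossings. It is checkerboard colorable if one can color a small neighbourhood of one side of each arc so that near each real crossing the colored sides alternate, and near each virtual crossing the colorings of the two strands pass through independently; such a diagram has exactly two checkerboard colorings (complementary to each other). A ribbon graph is a surface with boundary given as a union of vertex discs and edge discs (ribbons), vertices and edges meeting in disjoint line segments, each segment on the boundary of exactly one vertex and one edge, each edge containing exactly two segments; it is orientable if it is orientable as a surface; it is signed if each edge carries a sign $\pm$. Construction (Chmutov–Pak) of the signed Tait graph from a checkerboard coloring $C$ of $D$: thicken $D$ to a surface in which, at each virtual crossing, the two bands pass one over the other without touching. The colored neighbourhoods form annuli, each with an exterior circle running along the diagram except near real crossings, where it jumps from one strand to the other (so that the two colored corners at a crossing lie on exterior circles), and an interior circle. Replace each real crossing by an edge-ribbon connecting the corresponding arcs of the exterior circles at the two colored corners, and glue discs along the interior circles. The resulting ribbon graph is $\mathbf{G}_D$ (vertices = the capped annuli, edges = real crossings); the edge at a crossing is signed $+$ if the $A$-smoothing of the crossing joins the two colored corners and $-$ otherwise. Doing the same with the other checkerboard coloring gives $\mathbf{G}^*_D$. *)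

From mathcomp Require Import all_boot.
Set Implicit Arguments. Unset Strict Implicit. Unset Printing Implicit Defensive.

(* Darts = the four half-strands at each real crossing.                *)
(*  vrot d  = the next dart counterclockwise (in the plane) at the      *)
(*            same real crossing;                                      *)
(*  varc d  = the dart at the other end of the arc of the diagram      *)
(*            leaving the crossing through d (the arc may pass through *)
(*            any number of virtual crossings);                        *)
(*  vover d = d belongs to the over-strand of its crossing.            *)
(* The corner between d and vrot d is called "the corner of d".         *)
Record vdiagram := VDiagram {
  dart : finType;
  vrot : dart -> dart;
  varc : dart -> dart;
  vover : dart -> bool }.

Definition is_vdiagram (D : vdiagram) : Prop :=
  [/\ bijective (@vrot D),
      (forall d, iter 4 (@vrot D) d = d),
      (forall d, @vrot D d != d /\ iter 2 (@vrot D) d != d),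
      (forall d, @varc D (@varc D d) = d /\ @varc D d != d)
    & (forall d, @vover D (iter 2 (@vrot D) d) = @vover D d /\
                 @vover D (@vrot D d) = ~~ @vover D d)].

Definition vrotV (D : vdiagram) (d : dart D) : dart D := iter 3 (@vrot D) d.

(* A coloring: col d = true iff the corner of d (between d and vrot d)
   is colored.  Checkerboard: corners alternate at real crossings, and
   the colored side is carried consistently along each arc: the corner
   of d lies on the left of the arc travelled from d to e := varc d,
   and on arrival at e the left side is the corner of vrotV e. *)
Definition checkerboard (D : vdiagram) (col : dart D -> bool) : Prop :=
  (forall d, col (@vrot D d) = ~~ col d) /\
  (forall d, col d = col (vrotV (@varc D d))).

Definition checkerboard_colorable (D : vdiagram) : Prop :=
  exists col : dart D -> bool, checkerboard col.

(* Ribbon graphs in flag form (graph-encoded maps).  A flag is an end- *)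
(* point of a segment where an edge ribbon meets a vertex disc.        *)
(*  rg_seg  : the other endpoint of the same attaching segment;        *)
(*  rg_edge : the flag at the other end of the edge ribbon, joined to  *)
(*            this one by a long side of the ribbon;                   *)
(*  rg_vert : the next flag along the vertex-disc boundary (the arc of *)
(*            the vertex boundary not in any attaching segment).       *)
Record sribbon_graph := SRibbonGraph {
  flag : finType;
  rg_seg : flag -> flag;
  rg_edge : flag -> flag;
  rg_vert : flag -> flag;
  rg_sign : flag -> bool (* true = + *) }.

(* The surface is orientable iff its flags (the triangles of the
   barycentric subdivision) can be coherently oriented, i.e. two-colored
   so that each of the three adjacencies swaps the colors. *)
Definition orientable (G : sribbon_graph) : Prop :=
  exists o : flag G -> bool,
    forall x, [/\ o (@rg_seg G x) = ~~ o x,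
                  o (@rg_edge G x) = ~~ o x
                & o (@rg_vert G x) = ~~ o x].

(* Each dart lies on exactly one colored corner at its crossing, which *)
(* is the attaching segment of the edge ribbon of that crossing on the *)
(* exterior circle: flags = darts.                                     *)
(*  - colored corner of x : that of x if col x, else that of vrotV x;  *)
(*    its other endpoint is vrot x, resp. vrotV x.                     *)
(*  - the edge ribbon replaces the crossing by the smoothing joining   *)
(*    the two colored corners; its long sides are the two smoothing    *)
(*    arcs, each joining the two darts of a non-colored corner.        *)
(*  - the exterior circle follows the arc from x to varc x.            *)
(*  - sign +  iff the A-smoothing joins the colored corners, i.e. the  *)
(*    colored corner (y, vrot y) is an A-corner, i.e. y is over.       *)
Definition tait (D : vdiagram) (col : dart D -> bool) : sribbon_graph :=
  @SRibbonGraph (dart D)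
    (fun x => if col x then @vrot D x else vrotV x)
    (fun x => if col x then vrotV x else @vrot D x)
    (@varc D)
    (fun x => @vover D (if col x then x else vrotV x)).

(* The coloring itself orients the Tait graph: a checkerboard coloring changes
   value under each of the three flag adjacencies (a quarter turn at a crossing,
   its inverse, and travel along an arc of the diagram), so it two-colors the
   flags coherently.  The complementary coloring is again a checkerboard
   coloring, which handles the dual graph. *)
From mathcomp Require Import all_boot.

Section Checkerboard.

Variables (D : vdiagram) (col : dart D -> bool).
Hypothesis vrot_order4 : forall d, iter 4 (@vrot D) d = d.
Hypothesis col_checker : checkerboard col.

Lemma checkerboard_vrot d : col (@vrot D d) = ~~ col d.
Proof. by case: col_checker. Qed.

Lemma checkerboard_vrotV d : col (vrotV d) = ~~ col d.
Proof.
by rewrite -[in RHS](vrot_order4 d) -[iter 4 _ d]/(@vrot D (vrotV d))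
  checkerboard_vrot negbK.
Qed.

Lemma checkerboard_varc d : col (@varc D d) = ~~ col d.
Proof.
by case: col_checker => _ col_arc; rewrite [in RHS]col_arc checkerboard_vrotV negbK.
Qed.

Lemma checkerboardN : checkerboard (fun d => ~~ col d).
Proof.
split=> d; first by rewrite checkerboard_vrot.
by case: col_checker => _ ->.
Qed.

Lemma tait_orientable : orientable (tait col).
Proof.
exists col => x /=; rewrite !(fun_if col) checkerboard_vrot checkerboard_vrotV.
by rewrite checkerboard_varc !if_same.
Qed.

End Checkerboard.

Theorem lemma3p2 (D : vdiagram) (col : dart D -> bool) :
  is_vdiagram D -> checkerboard col ->
  orientable (tait col) /\ orientable (tait (fun d => ~~ col d)).
Proof.
move=> [_ vrot_order4 _ _ _] col_checker.
split; apply: tait_orientable => //.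
exact: checkerboardN.
Qed.
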